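(* Let $n\ge2$, $A_0,\dots,A_{n-1}\in\mathbb{R}$, $A_n=1$, $F(a)=\sum_{k=0}^nA_ka^k$. Let $x(a)$ be a smooth function on an open interval $I\subset(0,\infty)$ with $\dot x\neq 0$, and on $I\times\mathbb{R}$ let $H=\Pi^2+aP_y^2$, $\Pi=\frac{a}{\dot x}P_a$, $G=\sum_{k=0}^nA_kH^kP_y^{2(n-k)}$. Let $$Q_1=\sum_{k=1}^n b_k(a)\,\Pi^{2k-1}P_y^{2(n-k)+1}$$ with smooth functions $b_k$ of $a$, and $S_1=Q_1+yG$. Then $\{H,S_1\}=0$ if and only if, for every $k\in\{1,\dots,n\}$, $$b_k=\sum_{s=1}^k\frac{F^{(k-s)}}{(k-s)!}\,\frac{D_a^s x}{(1/2)_s}=\mathrm{Op}_k[F]x-\frac{F^{(k)}}{k!}\,x,$$ and $x$, after adding a suitable constant (which does not change $H$), satisfies the linear homogeneous ODE of order $n$ $$\mathrm{Op}_n[F]\,x=0 .$$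
   Context: $D_a=d/da$, $F^{(m)}=D_a^mF$, a dot denotes $d/da$; $\{\cdot,\cdot\}$ is the canonical Poisson bracket with $(P_a,P_y)$ conjugate to $(a,y)$. Pochhammer symbol: $(z)_0=1$, $(z)_s=z(z+1)\cdots(z+s-1)$. For a polynomial $F$ and integer $m\ge0$, the linear differential operator $\mathrm{Op}_m[F]=\sum_{s=0}^m\frac{F^{(m-s)}}{(m-s)!}\frac{1}{(1/2)_s}D_a^s$. *)

From Stdlib Require Import Reals Factorial.
From Coquelicot Require Import Coquelicot.
Open Scope R_scope.

Fixpoint poch (z : R) (s : nat) : R :=
  match s with
  | O => 1
  | S s' => poch z s' * (z + INR s')
  end.

Definition inI (l : R) (r : Rbar) (a : R) : Prop := l < a /\ Rbar_lt (Finite a) r.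

Definition Fpoly (A : nat -> R) (n : nat) (a : R) : R :=
  sum_f_R0 (fun k => A k * a ^ k) n.

Definition Op (m : nat) (F : R -> R) (g : R -> R) (a : R) : R :=
  sum_f_R0 (fun s => Derive_n F (m - s) a / INR (fact (m - s))
                      * / poch (1/2) s * Derive_n g s a) m.

(* Phase-space functions of (a, y, P_a, P_y). *)
Definition PhaseFun := R -> R -> R -> R -> R.

Definition pbracket (f g : PhaseFun) (a y pa py : R) : R :=
    Derive (fun t => f t y pa py) a * Derive (fun t => g a y t py) pa
  - Derive (fun t => f a y t py) pa * Derive (fun t => g t y pa py) a
  + Derive (fun t => f a t pa py) y * Derive (fun t => g a y pa t) py
  - Derive (fun t => f a y pa t) py * Derive (fun t => g a t pa py) y.

Definition Pi (x : R -> R) (a pa : R) : R := a / Derive x a * pa.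

Definition Ham (x : R -> R) : PhaseFun :=
  fun a y pa py => (Pi x a pa) ^ 2 + a * py ^ 2.

Definition Gfun (A : nat -> R) (n : nat) (x : R -> R) : PhaseFun :=
  fun a y pa py => sum_f_R0 (fun k => A k * (Ham x a y pa py) ^ k * py ^ (2 * (n - k))) n.

(* Q_1 = sum_{k=1}^n b_k(a) Pi^{2k-1} P_y^{2(n-k)+1}  (index j = k-1) *)
Definition Q1 (b : nat -> R -> R) (n : nat) (x : R -> R) : PhaseFun :=
  fun a y pa py => sum_f_R0 (fun j =>
     b (S j) a * (Pi x a pa) ^ (2 * S j - 1) * py ^ (2 * (n - S j) + 1)) (n - 1).

Definition S1 (A : nat -> R) (b : nat -> R -> R) (n : nat) (x : R -> R) : PhaseFun :=
  fun a y pa py => Q1 b n x a y pa py + y * Gfun A n x a y pa py.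

From Stdlib Require Import Reals Factorial Lia Lra.
From Coquelicot Require Import Coquelicot.
Open Scope R_scope.

(* Since H does not depend on y and G is a polynomial in H and P_y, the y-terms of
   {H, S_1} cancel and {H, S_1} = (a/xdot) (P_y^2 d_Pi Q_1 - 2 Pi d_a Q_1) - 2 a P_y G.
   With u = Pi^2, v = P_y^2 and Taylor's formula G = sum_j F^(j)(a)/j! u^j v^(n-j), this is
   2 a P_y / xdot times sum_j c_j(a) u^j v^(n-j), where
   c_j = (j + 1/2) b_(j+1) - D_a b_j - xdot F^(j)/j!  (b_0 = b_(n+1) = 0);
   as u ranges over (0, oo), the bracket vanishes iff every c_j does.
   The functions B_k = Op_k[F] x - F^(k)/k! x satisfy B_0 = 0 and
   D_a B_k = (k + 1/2) B_(k+1) - xdot F^(k)/k!, so c_0 = ... = c_(n-1) = 0 forces b_k = B_k,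
   after which c_n = - D_a (Op_n[F] x): the last condition says Op_n[F] x is constant on I. *)

Lemma is_derive_sum_f_R0 (f : nat -> R -> R) (df : nat -> R) (N : nat) (t : R) :
  (forall k, (k <= N)%nat -> is_derive (f k) t (df k)) ->
  is_derive (fun s => sum_f_R0 (fun k => f k s) N) t (sum_f_R0 df N).
Proof.
  intros Hf. rewrite <- sum_n_Reals.
  apply (is_derive_ext (fun s => sum_n (fun k => f k s) N)).
  - intros s. apply sum_n_Reals.
  - exact (is_derive_sum_n f N t df Hf).
Qed.

Lemma sum_f_R0_zero (N : nat) : sum_f_R0 (fun _ => 0) N = 0.
Proof. rewrite sum_cte. ring. Qed.

Lemma sum_f_R0_pow0_l (g : nat -> R) (N : nat) : sum_f_R0 (fun j => g j * 0 ^ j) N = g 0%nat.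
Proof. induction N as [|N IH]; simpl; [ring | rewrite IH; ring]. Qed.

Lemma sum_f_R0_pow0_r (g : nat -> R) (N : nat) : sum_f_R0 (fun j => g j * 0 ^ (N - j)) N = g N.
Proof.
  destruct N as [|N]; [simpl; ring|].
  rewrite tech5, Nat.sub_diag, (sum_eq _ (fun _ => 0)), sum_f_R0_zero; [simpl; ring|].
  intros j Hj. replace (S N - j)%nat with (S (N - j)) by lia. simpl. ring.
Qed.

Lemma inI_locally (l : R) (r : Rbar) (a : R) : inI l r a -> locally a (inI l r).
Proof.
  apply (open_and (fun t : R => Rbar_lt l t) (fun t : R => Rbar_lt t r)).
  - apply open_Rbar_gt.
  - apply open_Rbar_lt.
Qed.

Lemma inI_between (l : R) (r : Rbar) (a b t : R) :
  inI l r a -> inI l r b -> Rmin a b <= t <= Rmax a b -> inI l r t.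
Proof.
  unfold inI, Rmin, Rmax. intros [Ha1 Ha2] [Hb1 Hb2] Ht.
  destruct (Rle_dec a b); (split; [lra|]); destruct r; simpl in *; auto; lra.
Qed.

Lemma inI_nonempty (l : R) (r : Rbar) : Rbar_lt l r -> exists a, inI l r a.
Proof.
  destruct r as [r| |]; simpl; intros H; try contradiction.
  - exists ((l + r) / 2). unfold inI; simpl; lra.
  - exists (l + 1). unfold inI; simpl; split; [lra | exact I].
Qed.

Lemma is_derive_0_const_inI (l : R) (r : Rbar) (f : R -> R) :
  (forall t, inI l r t -> is_derive f t 0) ->
  forall a b, inI l r a -> inI l r b -> f a = f b.
Proof.
  intros Hd a b Ha Hb.
  assert (Hab : forall t, Rmin a b <= t <= Rmax a b -> is_derive f t 0)
    by (intros t Ht; apply Hd, (inI_between l r a b); auto).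
  destruct (MVT_gen f a b (fun _ => 0)) as [c [_ Hc]].
  - intros t Ht. apply Hab. lra.
  - intros t Ht. apply continuity_pt_filterlim.
    apply (ex_derive_continuous f). eexists. exact (Hab t Ht).
  - lra.
Qed.

Lemma Derive_ext_inI (l : R) (r : Rbar) (f g : R -> R) (a : R) :
  (forall t, inI l r t -> f t = g t) -> inI l r a -> Derive f a = Derive g a.
Proof.
  intros Hfg Ha. apply Derive_ext_loc.
  eapply filter_imp; [exact Hfg | exact (inI_locally l r a Ha)].
Qed.

Definition poly (N : nat) (c : nat -> R) (t : R) : R := sum_f_R0 (fun k => c k * t ^ k) N.

Definition deriv_coef (c : nat -> R) (k : nat) : R := c (S k) * INR (S k).

Fixpoint deriv_coef_iter (m : nat) (c : nat -> R) : nat -> R :=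
  match m with O => c | S m' => deriv_coef (deriv_coef_iter m' c) end.

Lemma deriv_coef_iter_val (m : nat) (c : nat -> R) (k : nat) :
  deriv_coef_iter m c k = c (k + m)%nat * INR (fact (k + m)) / INR (fact k).
Proof.
  revert k. induction m as [|m IH]; intros k; simpl.
  - rewrite Nat.add_0_r. field. apply INR_fact_neq_0.
  - unfold deriv_coef. rewrite IH. replace (S k + m)%nat with (k + S m)%nat by lia.
    change (fact (S k)) with (S k * fact k)%nat. rewrite mult_INR.
    field. split; [apply INR_fact_neq_0 | apply not_0_INR; lia].
Qed.

Lemma poly_is_derive (N : nat) (c : nat -> R) (t : R) :
  is_derive (poly N c) t (sum_f_R0 (fun k => c k * (INR k * t ^ pred k)) N).
Proof.
  apply (is_derive_sum_f_R0 (fun k s => c k * s ^ k)).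
  intros k _. auto_derive; [exact I | ring].
Qed.

Lemma poly_S_is_derive (N : nat) (c : nat -> R) (t : R) :
  is_derive (poly (S N) c) t (poly N (deriv_coef c) t).
Proof.
  replace (poly N (deriv_coef c) t) with (sum_f_R0 (fun k => c k * (INR k * t ^ pred k)) (S N)).
  - apply poly_is_derive.
  - rewrite decomp_sum by lia. simpl pred. change (INR 0) with 0.
    rewrite Rmult_0_l, Rmult_0_r, Rplus_0_l.
    apply sum_eq. intros k _. unfold deriv_coef. ring.
Qed.

Lemma Derive_n_poly (N : nat) (c : nat -> R) (m : nat) (t : R) :
  (m <= N)%nat -> Derive_n (poly N c) m t = poly (N - m) (deriv_coef_iter m c) t.
Proof.
  intros Hm. replace N with (m + (N - m))%nat at 1 by lia.
  generalize (N - m)%nat as K. clear. revert t.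
  induction m as [|m IH]; intros t K; simpl; [reflexivity|].
  replace (S (m + K)) with (m + S K)%nat by lia.
  rewrite (Derive_ext _ (poly (S K) (deriv_coef_iter m c))) by (intros; apply IH).
  apply is_derive_unique, poly_S_is_derive.
Qed.

Definition taylor_coef (F : R -> R) (m : nat) (a : R) : R := Derive_n F m a / INR (fact m).

Lemma taylor_coef_poly_top (N : nat) (c : nat -> R) (t : R) : taylor_coef (poly N c) N t = c N.
Proof.
  unfold taylor_coef. rewrite Derive_n_poly, Nat.sub_diag by lia.
  unfold poly; simpl. rewrite deriv_coef_iter_val. simpl. field. apply INR_fact_neq_0.
Qed.

Lemma Derive_n_poly_high (N : nat) (c : nat -> R) (m : nat) (t : R) :
  (N < m)%nat -> Derive_n (poly N c) m t = 0.
Proof.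
  intros Hm. revert t. induction Hm as [|m _ IH]; intros t; simpl.
  - rewrite (Derive_ext _ (fun _ => deriv_coef_iter N c 0%nat * 1)); [apply Derive_const|].
    intros s. rewrite Derive_n_poly, Nat.sub_diag by lia. reflexivity.
  - rewrite (Derive_ext _ (fun _ => 0)) by exact IH. apply Derive_const.
Qed.

Lemma ex_derive_Derive_n_poly (N : nat) (c : nat -> R) (m : nat) (t : R) :
  ex_derive (Derive_n (poly N c) m) t.
Proof.
  destruct (Nat.le_gt_cases m N) as [Hm|Hm].
  - apply (ex_derive_ext (poly (N - m) (deriv_coef_iter m c))).
    + intros s. symmetry. apply Derive_n_poly, Hm.
    + eexists. apply poly_is_derive.
  - apply (ex_derive_ext (fun _ => 0)); [|apply ex_derive_const].
    intros s. symmetry. apply Derive_n_poly_high, Hm.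
Qed.

Lemma poly_taylor (N : nat) (c : nat -> R) (a h : R) : 0 <= h ->
  poly N c (a + h) = sum_f_R0 (fun j => taylor_coef (poly N c) j a * h ^ j) N.
Proof.
  intros [Hh|<-].
  - destruct (Taylor_Lagrange (poly N c) N a (a + h)) as [z [_ Hz]]; [lra| |].
    + intros t _ [|k] _; [exact I | apply ex_derive_Derive_n_poly].
    + rewrite Hz, Derive_n_poly_high, Rmult_0_r, Rplus_0_r by lia.
      apply sum_eq. intros j _. replace (a + h - a) with h by ring.
      unfold taylor_coef. field. apply INR_fact_neq_0.
  - rewrite Rplus_0_r, sum_f_R0_pow0_l. unfold taylor_coef. simpl. field.
Qed.

Lemma poly_homogeneous_taylor (N : nat) (c : nat -> R) (a u v : R) : 0 <= u -> 0 <= v ->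
  sum_f_R0 (fun k => c k * (u + a * v) ^ k * v ^ (N - k)) N
  = sum_f_R0 (fun j => taylor_coef (poly N c) j a * u ^ j * v ^ (N - j)) N.
Proof.
  intros Hu [Hv|<-].
  - assert (Hpow : forall j, (j <= N)%nat -> v ^ N = v ^ j * v ^ (N - j))
      by (intros j Hj; rewrite <- pow_add; f_equal; lia).
    transitivity (v ^ N * poly N c (a + u / v)).
    + unfold poly. rewrite scal_sum. apply sum_eq. intros k Hk.
      replace (u + a * v) with (v * (a + u / v)) by (field; lra).
      rewrite Rpow_mult_distr, (Hpow k Hk). ring.
    + rewrite poly_taylor, scal_sum by (apply Rdiv_le_0_compat; lra).
      apply sum_eq. intros j Hj.
      replace (u ^ j) with ((u / v) ^ j * v ^ j)
        by (rewrite <- Rpow_mult_distr; f_equal; field; lra).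
      rewrite (Hpow j Hj). ring.
  - rewrite (sum_f_R0_pow0_r (fun k => c k * (u + a * 0) ^ k)).
    rewrite (sum_f_R0_pow0_r (fun j => taylor_coef (poly N c) j a * u ^ j)).
    rewrite taylor_coef_poly_top. f_equal. f_equal. ring.
Qed.

Lemma poly_S_shift (N : nat) (c : nat -> R) (t : R) :
  poly (S N) c t = c 0%nat + t * poly N (fun k => c (S k)) t.
Proof.
  unfold poly. rewrite decomp_sum, scal_sum by lia. simpl. f_equal; [ring|].
  apply sum_eq. intros k _. simpl. ring.
Qed.

Lemma poly_coef0_eq0_on_pos (N : nat) (c : nat -> R) :
  (forall t, 0 < t -> poly N c t = 0) -> c 0%nat = 0.
Proof.
  intros H. rewrite <- (sum_f_R0_pow0_l c N).
  apply (filterlim_locally_unique (F := at_right 0) (poly N c)).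
  - apply (filterlim_filter_le_1 (F := locally 0)); [apply filter_le_within|].
    apply (ex_derive_continuous (poly N c)). eexists. apply poly_is_derive.
  - apply (filterlim_ext_loc (fun _ => 0)); [|apply filterlim_const].
    unfold at_right, within. apply filter_forall. intros t Ht. symmetry. auto.
Qed.

Lemma poly_eq0_on_pos (N : nat) (c : nat -> R) :
  (forall t, 0 < t -> poly N c t = 0) -> forall j, (j <= N)%nat -> c j = 0.
Proof.
  revert c. induction N as [|N IH]; intros c H j Hj.
  - replace j with 0%nat by lia. exact (poly_coef0_eq0_on_pos 0 c H).
  - destruct j as [|j]; [exact (poly_coef0_eq0_on_pos _ c H)|].
    apply (IH (fun k => c (S k))); [|lia].
    intros t Ht. pose proof (H t Ht) as Ht0.
    rewrite poly_S_shift, (poly_coef0_eq0_on_pos _ c H) in Ht0.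
    apply (Rmult_eq_reg_l t); lra.
Qed.

Lemma poch_half_pos (s : nat) : 0 < poch (1/2) s.
Proof.
  induction s as [|s IH]; simpl; [lra|].
  apply Rmult_lt_0_compat; [exact IH|]. pose proof (pos_INR s). lra.
Qed.

(* Used with f m = F^(m)/m! and g s = x^(s)/(1/2)_s: the left summand is then the derivative
   of the s-th term of Op_k, since (1/2)_(s+1) = (s + 1/2) (1/2)_s. *)
Lemma Op_derivative_sum_identity (f g : nat -> R) (k : nat) :
  sum_f_R0 (fun s => INR (S (k - s)) * f (S (k - s)) * g s
                     + f (k - s)%nat * ((INR s + 1/2) * g (S s))) k
  = (INR k + 1/2) * sum_f_R0 (fun s => f (S k - s)%nat * g s) (S k) + 1/2 * f (S k) * g 0%nat.
Proof.
  rewrite sum_plus.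
  assert (E1 : sum_f_R0 (fun s => INR (S (k - s)) * f (S (k - s)) * g s) k
             = sum_f_R0 (fun s => INR (S k - s) * f (S k - s)%nat * g s) (S k)).
  { rewrite tech5, Nat.sub_diag. simpl (INR 0). rewrite !Rmult_0_l, Rplus_0_r.
    apply sum_eq. intros i Hi. replace (S k - i)%nat with (S (k - i)) by lia. reflexivity. }
  assert (E2 : sum_f_R0 (fun s => f (k - s)%nat * ((INR s + 1/2) * g (S s))) k
             = sum_f_R0 (fun s => (INR s - 1/2) * f (S k - s)%nat * g s) (S k)
               + 1/2 * f (S k) * g 0%nat).
  { rewrite (decomp_sum _ (S k)) by lia. simpl pred. rewrite Nat.sub_0_r. simpl (INR 0).
    rewrite (sum_eq (fun i => (INR (S i) - 1/2) * f (S k - S i)%nat * g (S i))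
                    (fun s => f (k - s)%nat * ((INR s + 1/2) * g (S s)))); [ring|].
    intros i _. rewrite S_INR. simpl (S k - S i)%nat. field. }
  assert (E3 : (INR k + 1/2) * sum_f_R0 (fun s => f (S k - s)%nat * g s) (S k)
             = sum_f_R0 (fun s => INR (S k - s) * f (S k - s)%nat * g s) (S k)
               + sum_f_R0 (fun s => (INR s - 1/2) * f (S k - s)%nat * g s) (S k)).
  { rewrite <- sum_plus, scal_sum. apply sum_eq. intros i Hi.
    replace (INR (S k - i)) with (INR k + 1 - INR i) by (rewrite minus_INR, S_INR by lia; reflexivity).
    field. }
  lra.
Qed.

Lemma Op_is_derive (k : nat) (F x : R -> R) (a : R) :
  (forall m, (m <= k)%nat -> ex_derive (Derive_n F m) a) ->
  (forall s, (s <= k)%nat -> ex_derive (Derive_n x s) a) ->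
  is_derive (Op k F x) a
    ((INR k + 1/2) * Op (S k) F x a + 1/2 * taylor_coef F (S k) a * x a).
Proof.
  intros HF Hx.
  replace ((INR k + 1/2) * Op (S k) F x a + 1/2 * taylor_coef F (S k) a * x a)
    with (sum_f_R0 (fun s =>
            Derive_n F (S (k - s)) a / INR (fact (k - s)) * / poch (1/2) s * Derive_n x s a
          + Derive_n F (k - s) a / INR (fact (k - s)) * / poch (1/2) s * Derive_n x (S s) a) k).
  - apply (is_derive_sum_f_R0 (fun s t =>
      Derive_n F (k - s) t / INR (fact (k - s)) * / poch (1/2) s * Derive_n x s t)).
    intros s Hs. auto_derive.
    + repeat split; [apply HF; lia | apply Hx; lia].
    + rewrite !Rmult_1_l. reflexivity.
  - set (f := fun m => taylor_coef F m a).
    set (g := fun s => Derive_n x s a / poch (1/2) s).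
    rewrite (sum_eq _ (fun s => INR (S (k - s)) * f (S (k - s)) * g s
                              + f (k - s)%nat * ((INR s + 1/2) * g (S s)))).
    + rewrite Op_derivative_sum_identity. unfold Op.
      f_equal; [f_equal; apply sum_eq; intros i _|]; unfold f, g, taylor_coef; simpl poch.
      * pose proof (poch_half_pos i). field. split; [lra | apply INR_fact_neq_0].
      * simpl Derive_n. field. apply INR_fact_neq_0.
    + intros i _. unfold f, g, taylor_coef. simpl poch.
      change (fact (S (k - i))) with (S (k - i) * fact (k - i))%nat. rewrite mult_INR.
      pose proof (poch_half_pos i). pose proof (pos_INR i).
      pose proof (INR_fact_neq_0 (k - i)). pose proof (pos_INR (k - i)).
      rewrite S_INR. field. lra.
Qed.

Definition bOp (F x : R -> R) (k : nat) (a : R) : R := Op k F x a - taylor_coef F k a * x a.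

Lemma bOp_0 (F x : R -> R) (a : R) : bOp F x 0 a = 0.
Proof. unfold bOp, Op, taylor_coef. simpl. field. Qed.

Lemma bOp_is_derive (k : nat) (F x : R -> R) (a : R) :
  (forall m, (m <= S k)%nat -> ex_derive (Derive_n F m) a) ->
  (forall s, (s <= k)%nat -> ex_derive (Derive_n x s) a) ->
  is_derive (bOp F x k) a
    ((INR k + 1/2) * bOp F x (S k) a - Derive x a * taylor_coef F k a).
Proof.
  intros HF Hx.
  pose proof (Op_is_derive k F x a (fun m Hm => HF m ltac:(lia)) Hx) as HOp.
  unfold bOp, taylor_coef. auto_derive.
  - repeat split; [eexists; exact HOp | apply HF; lia | apply (Hx 0%nat); lia].
  - change (Derive (fun t => Op k F x t) a) with (Derive (Op k F x) a).
    rewrite (is_derive_unique _ _ _ HOp). unfold taylor_coef.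
    change (Derive (fun t => Derive_n F k t) a) with (Derive_n F (S k) a).
    change (Derive (fun t => x t) a) with (Derive x a).
    change (fact (S k)) with (S k * fact k)%nat. rewrite mult_INR, S_INR.
    pose proof (INR_fact_neq_0 k). pose proof (pos_INR k).
    simpl Derive_n. field. lra.
Qed.

Lemma Derive_n_plus_const (f : R -> R) (c : R) (s : nat) (t : R) :
  Derive_n (fun u => f u + c) (S s) t = Derive_n f (S s) t.
Proof.
  revert t. induction s as [|s IH]; intros t.
  - simpl. unfold Derive. f_equal. apply Lim_ext. intros h. unfold Rdiv. ring.
  - simpl Derive_n at 1. rewrite (Derive_ext _ (Derive_n f (S s))) by exact IH. reflexivity.
Qed.

Lemma Op_plus_const (k : nat) (F x : R -> R) (c a : R) :
  Op k F (fun t => x t + c) a = Op k F x a + taylor_coef F k a * c.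
Proof.
  unfold Op, taylor_coef. destruct k as [|k]; [simpl; field|].
  rewrite !(decomp_sum _ (S k)) by lia. simpl pred.
  rewrite (sum_eq (fun i => Derive_n F (S k - S i) a / INR (fact (S k - S i))
                            * / poch (1/2) (S i) * Derive_n (fun t => x t + c) (S i) a)
                  (fun i => Derive_n F (S k - S i) a / INR (fact (S k - S i))
                            * / poch (1/2) (S i) * Derive_n x (S i) a)).
  - rewrite Nat.sub_0_r. simpl poch. simpl Derive_n. field. apply INR_fact_neq_0.
  - intros i _. rewrite Derive_n_plus_const. reflexivity.
Qed.

Lemma is_derive_sum_pow (beta : nat -> R -> R) (dbeta : nat -> R) (p : R -> R) (dp : R)
    (e : nat -> nat) (c : nat -> R) (N : nat) (t : R) :
  (forall j, (j <= N)%nat -> is_derive (beta j) t (dbeta j)) -> is_derive p t dp ->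
  is_derive (fun s => sum_f_R0 (fun j => beta j s * p s ^ e j * c j) N) t
    (sum_f_R0 (fun j => dbeta j * p t ^ e j * c j) N
     + dp * sum_f_R0 (fun j => beta j t * (INR (e j) * p t ^ pred (e j)) * c j) N).
Proof.
  intros Hbeta Hp. rewrite scal_sum, <- sum_plus.
  apply (is_derive_sum_f_R0 (fun j s => beta j s * p s ^ e j * c j)).
  intros j Hj. pose proof (Hbeta j Hj) as Hbj. auto_derive.
  - repeat split; eexists; eassumption.
  - change (Derive (fun s => beta j s) t) with (Derive (beta j) t).
    change (Derive (fun s => p s) t) with (Derive p t).
    rewrite (is_derive_unique _ _ _ Hbj), (is_derive_unique _ _ _ Hp). ring.
Qed.

Lemma is_derive_sum_const_pow (beta : nat -> R) (p : R -> R) (dp : R)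
    (e : nat -> nat) (c : nat -> R) (N : nat) (t : R) :
  is_derive p t dp ->
  is_derive (fun s => sum_f_R0 (fun j => beta j * p s ^ e j * c j) N) t
    (dp * sum_f_R0 (fun j => beta j * (INR (e j) * p t ^ pred (e j)) * c j) N).
Proof.
  intros Hp.
  replace (dp * _) with (sum_f_R0 (fun j => 0 * p t ^ e j * c j) N
      + dp * sum_f_R0 (fun j => beta j * (INR (e j) * p t ^ pred (e j)) * c j) N).
  - apply (is_derive_sum_pow (fun j _ => beta j)); [|exact Hp].
    intros j _. auto_derive; [exact I | reflexivity].
  - rewrite (sum_eq _ (fun _ => 0)), sum_f_R0_zero; [ring|]. intros j _. ring.
Qed.

Definition Q1_dPi (n : nat) (b : nat -> R -> R) (a P py : R) : R :=
  sum_f_R0 (fun j => b (S j) a * (INR (2 * S j - 1) * P ^ pred (2 * S j - 1))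
                     * py ^ (2 * (n - S j) + 1)) (n - 1).

Definition Q1_da (n : nat) (b : nat -> R -> R) (a P py : R) : R :=
  sum_f_R0 (fun j => Derive (b (S j)) a * P ^ (2 * S j - 1) * py ^ (2 * (n - S j) + 1)) (n - 1).

Definition Gfun_dH (n : nat) (A : nat -> R) (h py : R) : R :=
  sum_f_R0 (fun k => A k * (INR k * h ^ pred k) * py ^ (2 * (n - k))) n.

Section PartialDerivatives.

Variables (n : nat) (A : nat -> R) (b : nat -> R -> R) (x : R -> R) (a y pa py : R).

Lemma is_derive_Pi_pa : is_derive (fun t => Pi x a t) pa (a / Derive x a).
Proof. unfold Pi. auto_derive; [exact I | ring]. Qed.

Lemma is_derive_Ham_a (dP : R) : is_derive (fun t => Pi x t pa) a dP ->
  is_derive (fun t => Ham x t y pa py) a (2 * Pi x a pa * dP + py ^ 2).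
Proof.
  intros HP. unfold Ham. auto_derive; [repeat split; eexists; exact HP|].
  rewrite (is_derive_unique (fun t : R => Pi x t pa) a dP HP). ring.
Qed.

Lemma is_derive_Ham_pa :
  is_derive (fun t => Ham x a y t py) pa (2 * Pi x a pa * (a / Derive x a)).
Proof. unfold Ham, Pi. auto_derive; [exact I | ring]. Qed.

Lemma is_derive_S1_a (dP : R) :
  (1 <= n)%nat -> (forall k, (1 <= k <= n)%nat -> ex_derive (b k) a) ->
  is_derive (fun t => Pi x t pa) a dP ->
  is_derive (fun t => S1 A b n x t y pa py) a
    (Q1_da n b a (Pi x a pa) py + dP * Q1_dPi n b a (Pi x a pa) py
     + y * ((2 * Pi x a pa * dP + py ^ 2) * Gfun_dH n A (Ham x a y pa py) py)).
Proof.
  intros Hn Hb HP.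
  apply (is_derive_plus (fun t => Q1 b n x t y pa py) (fun t => y * Gfun A n x t y pa py)).
  - apply (is_derive_sum_pow (fun j => b (S j)) (fun j => Derive (b (S j)) a)
             (fun t => Pi x t pa)); [|exact HP].
    intros j Hj. apply Derive_correct, Hb. lia.
  - apply is_derive_scal, (is_derive_sum_const_pow A (fun t => Ham x t y pa py)).
    exact (is_derive_Ham_a dP HP).
Qed.

Lemma is_derive_S1_pa :
  is_derive (fun t => S1 A b n x a y t py) pa
    (a / Derive x a * Q1_dPi n b a (Pi x a pa) py
     + y * (2 * Pi x a pa * (a / Derive x a) * Gfun_dH n A (Ham x a y pa py) py)).
Proof.
  apply (is_derive_plus (fun t => Q1 b n x a y t py) (fun t => y * Gfun A n x a y t py)).
  - apply (is_derive_sum_const_pow (fun j => b (S j) a) (fun t => Pi x a t)), is_derive_Pi_pa.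
  - apply is_derive_scal, (is_derive_sum_const_pow A (fun t => Ham x a y t py)), is_derive_Ham_pa.
Qed.

End PartialDerivatives.

Lemma pbracket_Ham_S1_expand (n : nat) (A : nat -> R) (b : nat -> R -> R) (x : R -> R)
    (a y pa py : R) :
  (1 <= n)%nat -> ex_derive (Derive x) a -> Derive x a <> 0 ->
  (forall k, (1 <= k <= n)%nat -> ex_derive (b k) a) ->
  pbracket (Ham x) (S1 A b n x) a y pa py
  = a / Derive x a * (py ^ 2 * Q1_dPi n b a (Pi x a pa) py
                      - 2 * (Pi x a pa * Q1_da n b a (Pi x a pa) py))
    - 2 * a * py * Gfun A n x a y pa py.
Proof.
  intros Hn Hx2 Hxd Hb.
  assert (HPa : ex_derive (fun t => Pi x t pa) a) by (unfold Pi; auto_derive; auto).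
  destruct HPa as [dP HPa].
  assert (HHy : Derive (fun t => Ham x a t pa py) y = 0) by (unfold Ham; apply Derive_const).
  assert (HHpy : Derive (fun t => Ham x a y pa t) py = 2 * a * py)
    by (apply is_derive_unique; unfold Ham; auto_derive; [exact I | ring]).
  assert (HSy : Derive (fun t => S1 A b n x a t pa py) y = Gfun A n x a y pa py).
  { apply is_derive_unique.
    apply (is_derive_ext (fun t => Q1 b n x a y pa py + t * Gfun A n x a y pa py));
      [reflexivity | auto_derive; [exact I | ring]]. }
  unfold pbracket.
  rewrite (is_derive_unique (fun t : R => Ham x t y pa py) _ _ (is_derive_Ham_a x a y pa py dP HPa)),
    (is_derive_unique (fun t : R => Ham x a y t py) _ _ (is_derive_Ham_pa x a y pa py)),
    (is_derive_unique (fun t : R => S1 A b n x t y pa py) _ _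
       (is_derive_S1_a n A b x a y pa py dP Hn Hb HPa)),
    (is_derive_unique (fun t : R => S1 A b n x a y t py) _ _ (is_derive_S1_pa n A b x a y pa py)),
    HHy, HHpy, HSy.
  ring.
Qed.

Definition bext (n : nat) (b : nat -> R -> R) (j : nat) : R -> R :=
  if andb (1 <=? j)%nat (j <=? n)%nat then b j else fun _ => 0.

Lemma bext_in (n : nat) (b : nat -> R -> R) (j : nat) : (1 <= j <= n)%nat -> bext n b j = b j.
Proof.
  intros Hj. unfold bext.
  replace (1 <=? j)%nat with true by (symmetry; apply Nat.leb_le; lia).
  replace (j <=? n)%nat with true by (symmetry; apply Nat.leb_le; lia). reflexivity.
Qed.

Lemma bext_out (n : nat) (b : nat -> R -> R) (j : nat) :
  (j = 0 \/ n < j)%nat -> bext n b j = fun _ => 0.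
Proof.
  intros [->|Hj]; [reflexivity|]. unfold bext.
  replace (j <=? n)%nat with false by (symmetry; apply Nat.leb_gt; lia).
  rewrite Bool.andb_false_r. reflexivity.
Qed.

Lemma Q1_dPi_homogeneous (n : nat) (b : nat -> R -> R) (a P py : R) : (1 <= n)%nat ->
  py ^ 2 * Q1_dPi n b a P py
  = 2 * py * sum_f_R0 (fun j => (INR j + 1/2) * bext n b (S j) a * (P ^ 2) ^ j * (py ^ 2) ^ (n - j)) n.
Proof.
  intros Hn. destruct n as [|m]; [lia|].
  rewrite tech5, (bext_out (S m) b (S (S m))), Rmult_0_r, !Rmult_0_l, Rplus_0_r by lia.
  unfold Q1_dPi. replace (S m - 1)%nat with m by lia.
  rewrite !scal_sum. apply sum_eq. intros j Hj. rewrite bext_in by lia.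
  replace (2 * S j - 1)%nat with (S (2 * j)) by lia.
  replace (2 * (S m - S j) + 1)%nat with (S (2 * (m - j))) by lia.
  replace (S m - j)%nat with (S (m - j)) by lia.
  change (pred (S (2 * j))) with (2 * j)%nat.
  rewrite <- (tech_pow_Rmult py), <- (tech_pow_Rmult (py ^ 2)), !pow_mult, S_INR, mult_INR.
  simpl (INR 2). field.
Qed.

Lemma Q1_da_homogeneous (n : nat) (b : nat -> R -> R) (a P py : R) : (1 <= n)%nat ->
  P * Q1_da n b a P py
  = py * sum_f_R0 (fun j => Derive (bext n b j) a * (P ^ 2) ^ j * (py ^ 2) ^ (n - j)) n.
Proof.
  intros Hn. destruct n as [|m]; [lia|].
  rewrite decomp_sum, (bext_out (S m) b 0), Derive_const, !Rmult_0_l, Rplus_0_l by lia.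
  unfold Q1_da. replace (S m - 1)%nat with m by lia. simpl pred.
  rewrite !scal_sum. apply sum_eq. intros j Hj. rewrite bext_in by lia.
  replace (2 * S j - 1)%nat with (S (2 * j)) by lia.
  replace (2 * (S m - S j) + 1)%nat with (S (2 * (m - j))) by lia.
  replace (S m - S j)%nat with (m - j)%nat by lia.
  rewrite <- (tech_pow_Rmult P), <- (tech_pow_Rmult py), <- (tech_pow_Rmult (P ^ 2)), !pow_mult.
  ring.
Qed.

Lemma Gfun_homogeneous_taylor (A : nat -> R) (n : nat) (x : R -> R) (a y pa py : R) :
  Gfun A n x a y pa py
  = sum_f_R0 (fun j => taylor_coef (Fpoly A n) j a * (Pi x a pa ^ 2) ^ j * (py ^ 2) ^ (n - j)) n.
Proof.
  unfold Gfun, Ham.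
  rewrite (sum_eq _ (fun k => A k * (Pi x a pa ^ 2 + a * py ^ 2) ^ k * (py ^ 2) ^ (n - k)))
    by (intros k _; rewrite pow_mult; reflexivity).
  apply (poly_homogeneous_taylor n A); apply pow2_ge_0.
Qed.

Definition bracket_coef (n : nat) (A : nat -> R) (b : nat -> R -> R) (x : R -> R) (j : nat) (a : R) : R :=
  (INR j + 1/2) * bext n b (S j) a - Derive (bext n b j) a
  - Derive x a * taylor_coef (Fpoly A n) j a.

Lemma pbracket_Ham_S1 (n : nat) (A : nat -> R) (b : nat -> R -> R) (x : R -> R) (a y pa py : R) :
  (1 <= n)%nat -> ex_derive (Derive x) a -> Derive x a <> 0 ->
  (forall k, (1 <= k <= n)%nat -> ex_derive (b k) a) ->
  pbracket (Ham x) (S1 A b n x) a y pa py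
  = 2 * a * py / Derive x a
    * sum_f_R0 (fun j => bracket_coef n A b x j a * (Pi x a pa ^ 2) ^ j * (py ^ 2) ^ (n - j)) n.
Proof.
  intros Hn Hx2 Hxd Hb.
  rewrite pbracket_Ham_S1_expand, Q1_dPi_homogeneous, Q1_da_homogeneous, Gfun_homogeneous_taylor
    by assumption.
  set (u := Pi x a pa ^ 2). set (v := py ^ 2).
  rewrite (sum_eq (fun j => bracket_coef n A b x j a * u ^ j * v ^ (n - j))
                  (fun j => (INR j + 1/2) * bext n b (S j) a * u ^ j * v ^ (n - j)
                            - Derive (bext n b j) a * u ^ j * v ^ (n - j)
                            - taylor_coef (Fpoly A n) j a * u ^ j * v ^ (n - j) * Derive x a))
    by (intros j _; unfold bracket_coef; ring).
  rewrite !minus_sum, <- scal_sum. field. exact Hxd.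
Qed.

Section Proposition5.

Variables (n : nat) (A : nat -> R) (l : R) (r : Rbar) (x : R -> R) (b : nat -> R -> R).
Hypothesis hAn : A n = 1.
Hypothesis hl : 0 <= l.
Hypothesis hlr : Rbar_lt l r.
Hypothesis hx : forall (m : nat) (a : R), inI l r a -> ex_derive_n x m a.
Hypothesis hxd : forall a : R, inI l r a -> Derive x a <> 0.
Hypothesis hb : forall (k m : nat) (a : R), (1 <= k <= n)%nat -> inI l r a -> ex_derive_n (b k) m a.

Local Notation F := (Fpoly A n).

Lemma taylor_coef_F_top (t : R) : taylor_coef F n t = 1.
Proof. rewrite <- hAn. exact (taylor_coef_poly_top n A t). Qed.

Lemma taylor_coef_F_high (t : R) : taylor_coef F (S n) t = 0.
Proof.
  unfold taylor_coef. change (Fpoly A n) with (poly n A).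
  rewrite Derive_n_poly_high by lia. unfold Rdiv. ring.
Qed.

Lemma Op_F_shift (c a : R) : Op n F (fun t => x t + c) a = Op n F x a + c.
Proof. rewrite Op_plus_const, taylor_coef_F_top. ring. Qed.

Lemma Derive_bOp (j : nat) (a : R) : inI l r a ->
  Derive (bOp F x j) a = (INR j + 1/2) * bOp F x (S j) a - Derive x a * taylor_coef F j a.
Proof.
  intros Ha. apply is_derive_unique, bOp_is_derive.
  - intros m _. apply (ex_derive_Derive_n_poly n A).
  - intros s _. exact (hx (S s) a Ha).
Qed.

Lemma bracket_coef_bOp :
  (forall j t, (j <= n)%nat -> inI l r t -> bext n b j t = bOp F x j t) ->
  forall a, inI l r a ->
  (forall j, (j < n)%nat -> bracket_coef n A b x j a = 0)
  /\ bracket_coef n A b x n a = - Derive (Op n F x) a.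
Proof.
  intros HB a Ha. unfold bracket_coef.
  assert (HD : forall j, (j <= n)%nat -> Derive (bext n b j) a = Derive (bOp F x j) a)
    by (intros j Hj; apply (Derive_ext_inI l r); auto).
  split.
  - intros j Hj. rewrite HD, Derive_bOp, HB by (auto; lia). ring.
  - rewrite HD, Derive_bOp, (bext_out n b (S n)) by (auto; lia).
    rewrite (is_derive_unique _ _ _ (Op_is_derive n F x a
      (fun m _ => ex_derive_Derive_n_poly n A m a) (fun s _ => hx (S s) a Ha))).
    unfold bOp. rewrite taylor_coef_F_top, taylor_coef_F_high. ring.
Qed.

Lemma bext_eq_bOp :
  (forall a, inI l r a -> forall j, (j <= n)%nat -> bracket_coef n A b x j a = 0) ->
  forall j t, (j <= n)%nat -> inI l r t -> bext n b j t = bOp F x j t.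
Proof.
  intros Hc j. induction j as [|j IH]; intros t Hj Ht.
  - rewrite bext_out, bOp_0 by lia. reflexivity.
  - pose proof (Hc t Ht j ltac:(lia)) as Hcj. unfold bracket_coef in Hcj.
    rewrite (Derive_ext_inI l r _ (bOp F x j)), Derive_bOp in Hcj by (auto; intros; apply IH; auto; lia).
    pose proof (pos_INR j). apply (Rmult_eq_reg_l (INR j + 1/2)); lra.
Qed.

Lemma bracket_coef_zero_iff :
  (forall a, inI l r a -> forall j, (j <= n)%nat -> bracket_coef n A b x j a = 0) <->
  ((forall k a, (1 <= k <= n)%nat -> inI l r a -> b k a = bOp F x k a)
   /\ exists c, forall a, inI l r a -> Op n F (fun t => x t + c) a = 0).
Proof.
  split.
  - intros Hc. pose proof (bext_eq_bOp Hc) as HB. split.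
    + intros k a Hk Ha. rewrite <- (bext_in n b k Hk). apply HB; [lia | exact Ha].
    + assert (HOp : forall t, inI l r t -> is_derive (Op n F x) t 0).
      { intros t Ht. destruct (bracket_coef_bOp HB t Ht) as [_ Htop].
        rewrite (Hc t Ht n (le_n n)) in Htop.
        replace 0 with (Derive (Op n F x) t) by lra.
        apply Derive_correct. eexists. apply (Op_is_derive n F x t).
        - intros m _. apply (ex_derive_Derive_n_poly n A).
        - intros s _. exact (hx (S s) t Ht). }
      destruct (inI_nonempty l r hlr) as [a0 Ha0].
      exists (- Op n F x a0). intros a Ha.
      rewrite Op_F_shift, (is_derive_0_const_inI l r (Op n F x) HOp a a0 Ha Ha0). ring.
  - intros [Hbk [c Hc]] a Ha j Hj.
    assert (HB : forall j t, (j <= n)%nat -> inI l r t -> bext n b j t = bOp F x j t).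
    { intros [|i] t Hi Ht; [rewrite bext_out, bOp_0 by lia; reflexivity|].
      rewrite bext_in by lia. apply Hbk; auto; lia. }
    destruct (bracket_coef_bOp HB a Ha) as [Hlow Htop].
    destruct (Nat.lt_ge_cases j n) as [Hjn|Hjn]; [auto|].
    replace j with n by lia. rewrite Htop.
    assert (Hconst : forall t, inI l r t -> Op n F x t = - c).
    { intros t Ht. pose proof (Hc t Ht) as Hct. rewrite Op_F_shift in Hct. lra. }
    rewrite (Derive_ext_inI l r _ _ a Hconst Ha), Derive_const. ring.
Qed.

Lemma pbracket_zero_iff_bracket_coef : (1 <= n)%nat ->
  (forall a y pa py, inI l r a -> pbracket (Ham x) (S1 A b n x) a y pa py = 0) <->
  (forall a, inI l r a -> forall j, (j <= n)%nat -> bracket_coef n A b x j a = 0).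
Proof.
  intros hn.
  assert (Hbr : forall a y pa py, inI l r a -> pbracket (Ham x) (S1 A b n x) a y pa py
    = 2 * a * py / Derive x a
      * sum_f_R0 (fun j => bracket_coef n A b x j a * (Pi x a pa ^ 2) ^ j * (py ^ 2) ^ (n - j)) n).
  { intros a y pa py Ha. apply pbracket_Ham_S1; auto.
    - exact (hx 2 a Ha).
    - intros k Hk. exact (hb k 1 a Hk Ha). }
  split.
  - intros H a Ha. apply (poly_eq0_on_pos n (fun j => bracket_coef n A b x j a)).
    intros u Hu. pose proof (hxd a Ha) as Hxa.
    assert (Hapos : 0 < a) by (destruct Ha; lra).
    pose proof (H a 0 (sqrt u * Derive x a / a) 1 Ha) as E. rewrite Hbr in E by exact Ha.
    assert (Hpi : Pi x a (sqrt u * Derive x a / a) ^ 2 = u).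
    { unfold Pi. replace (a / Derive x a * (sqrt u * Derive x a / a)) with (sqrt u)
        by (field; lra).
      apply pow2_sqrt. lra. }
    rewrite Hpi in E.
    apply Rmult_integral in E. destruct E as [E|E].
    + exfalso. revert E. unfold Rdiv. rewrite Rmult_1_r.
      apply Rmult_integral_contrapositive. split; [lra | apply Rinv_neq_0_compat, Hxa].
    + rewrite <- E. apply sum_eq. intros j _. rewrite pow1, pow1. ring.
  - intros H a y pa py Ha. rewrite Hbr by exact Ha.
    rewrite (sum_eq _ (fun _ => 0)), sum_f_R0_zero; [ring|].
    intros j Hj. rewrite (H a Ha j Hj). ring.
Qed.

End Proposition5.

Theorem proposition5
  (n : nat) (hn : (2 <= n)%nat)
  (A : nat -> R) (hAn : A n = 1)
  (l : R) (r : Rbar) (hl : 0 <= l) (hlr : Rbar_lt (Finite l) r)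
  (x : R -> R)
  (hx : forall (m : nat) (a : R), inI l r a -> ex_derive_n x m a)
  (hxd : forall a : R, inI l r a -> Derive x a <> 0)
  (b : nat -> R -> R)
  (hb : forall (k m : nat) (a : R), (1 <= k <= n)%nat -> inI l r a -> ex_derive_n (b k) m a) :
  (forall a y pa py : R, inI l r a ->
      pbracket (Ham x) (S1 A b n x) a y pa py = 0)
  <->
  ((forall (k : nat) (a : R), (1 <= k <= n)%nat -> inI l r a ->
      b k a = Op k (Fpoly A n) x a - Derive_n (Fpoly A n) k a / INR (fact k) * x a)
   /\
   (exists c : R, forall a : R, inI l r a ->
      Op n (Fpoly A n) (fun t => x t + c) a = 0)).
Proof.
  assert (hn1 : (1 <= n)%nat) by lia.
  etransitivity.
  - exact (pbracket_zero_iff_bracket_coef n A l r x b hl hx hxd hb hn1).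
  - exact (bracket_coef_zero_iff n A l r x b hAn hlr hx).
Qed.
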